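(* Let $N,n,m,p$ be positive integers, $A\in\mathbb{R}^{n\times n}$, $B\in\mathbb{R}^{n\times p}$, $C\in\mathbb{R}^{m\times n}$, $H\in\mathbb{R}^{n\times m}$, $W=[w_{ij}]\in\mathbb{R}^{N\times N}$ with $w_{ii}=0$ for all $i$, $\Delta=\mathrm{diag}(\delta_1,\dots,\delta_N)$ with $\delta_i\in\{0,1\}$, and $h>0$. Put $\mathcal{B}(h)=\int_0^h e^{A\tau}d\tau\,B$, $\mathcal{H}(h)=\int_0^h e^{A\tau}d\tau\,HC$, $\Phi_s=I_N\otimes e^{Ah}+W\otimes\mathcal{H}(h)$, $\Psi_s=\Delta\otimes\mathcal{B}(h)$. Assume $W$ is diagonalizable, let $v_1,\dots,v_N\in\mathbb{C}^{1\times N}$ be linearly independent row vectors with $v_kW=\lambda_kv_k$, and let $E_k=e^{Ah}+\lambda_k\mathcal{H}(h)$, $k=1,\dots,N$. Assume moreover that every $E_k$ is nonsingular. Then the networked sampled-data system $X(k+1)=\Phi_sX(k)+\Psi_sU(k)$ is controllable if and only if the following three conditions all hold: (1) the pair $(W,\Delta)$ is controllable; (2) the pair $(E_k,\mathcal{B}(h))$ is controllable for every $k=1,\dots,N$; (3) whenever $\theta\in\mathbb{C}$ is a common eigenvalue of $E_{k_1},\dots,E_{k_q}$ for distinct indices $k_1,\dots,k_q\in\{1,\dots,N\}$ with $1<q\le N$, then $(v_{k_1}\otimes\xi_{k_1}+\dots+v_{k_q}\otimes\xi_{k_q})(\Delta\otimes\mathcal{B}(h))\neq0$ for all $\xi_j\in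 M(\theta\,|\,E_j)$, $j=k_1,\dots,k_q$, with $(\xi_{k_1},\dots,\xi_{k_q})\neq0$.
   Context: The networked sampled-data system is the discrete-time system $X(k+1)=\Phi_sX(k)+\Psi_sU(k)$, $X(k)\in\mathbb{R}^{Nn}$, $U(k)\in\mathbb{R}^{Np}$; it is called controllable if every initial state can be steered to the origin in finitely many steps. For $F\in\mathbb{C}^{q\times q}$, $G\in\mathbb{C}^{q\times s}$, the pair $(F,G)$ is called controllable if $\mathrm{rank}[sI_q-F,\ G]=q$ for every $s\in\mathbb{C}$. $M(\theta\,|\,E)=\{\xi:\ \xi E=\theta\xi\}$ is the left eigenspace of the square matrix $E$ for $\theta$. $\otimes$ is the Kronecker product. *)

From HB Require Import structures.
From mathcomp Require Import all_boot all_order all_algebra.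
From mathcomp Require Import complex mxtens.
From mathcomp Require Import all_classical all_reals all_analysis.
Set Implicit Arguments. Unset Strict Implicit. Unset Printing Implicit Defensive.
Import Order.TTheory GRing.Theory Num.Theory.
Import numFieldNormedType.Exports.
Local Open Scope ring_scope.

Definition expm (R : realType) (n : nat) (A : 'M[R]_n) (t : R) : 'M[R]_n :=
  \matrix_(i, j) (limn (series (fun k : nat =>
     (((t ^+ k / (k`!)%:R) *: A ^+ k) i j : R)))).

Definition int_expm (R : realType) (n : nat) (A : 'M[R]_n) (h : R) : 'M[R]_n :=
  \matrix_(i, j) Rintegral (@lebesgue_measure R) `[0, h]%classic
                   (fun tau => expm A tau i j).

Definition toC (R : rcfType) (x : R) : R[i] := Complex x 0.
Definition mxC (R : rcfType) (m n : nat) (M : 'M[R]_(m, n)) : 'M[R[i]]_(m, n) :=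
  map_mx (@toC R) M.

Fixpoint traj (R : ringType) (d r : nat) (Phi : 'M[R]_d) (Psi : 'M[R]_(d, r))
  (x0 : 'cV[R]_d) (u : nat -> 'cV[R]_r) (k : nat) : 'cV[R]_d :=
  match k with
  | 0 => x0
  | k'.+1 => Phi *m traj Phi Psi x0 u k' + Psi *m u k'
  end.

Definition sys_controllable (R : ringType) (d r : nat) (Phi : 'M[R]_d)
  (Psi : 'M[R]_(d, r)) : Prop :=
  forall x0 : 'cV[R]_d, exists (K : nat) (u : nat -> 'cV[R]_r),
    traj Phi Psi x0 u K = 0.

Definition pair_controllable (R : rcfType) (q s : nat) (F : 'M[R[i]]_q)
  (G : 'M[R[i]]_(q, s)) : Prop :=
  forall z : R[i], \rank (row_mx (z%:M - F) G) = q.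

Definition in_left_eigenspace (F : fieldType) (q : nat) (theta : F)
  (E : 'M[F]_q) (xi : 'rV[F]_q) : Prop := xi *m E = theta *: xi.

(* Popov-Belevitch-Hautus: a discrete-time system with invertible state matrix
   is controllable iff no complex left eigenvector of the state matrix is
   annihilated by the input matrix.  Necessity: such an eigenvector eta sees every
   trajectory as eta x(k) = theta^k eta x(0).  Sufficiency: Kalman's rank
   condition holds over C, since a nonzero Phi-stable space of rows annihilating
   all Phi^i Psi would contain a left eigenvector; real parts of a complex
   steering control then steer the real system.
   Since v_k W = lambda_k v_k and the v_k form a basis, every row vector of size
   N n is uniquely sum_k v_k (x) xi_k, and it is a left eigenvector of
   Phi_s = I (x) e^{Ah} + W (x) H(h) for theta iff xi_k E_k = theta xi_k for all
   k; moreover (v_k (x) xi) Psi_s = (v_k Delta) (x) (xi B(h)).  An eigenvector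
   supported on one index k is killed by Psi_s iff v_k Delta = 0 or
   xi_k B(h) = 0, which (1) and (2) exclude; one supported on two or more indices
   is what (3) excludes.  Conversely, a left eigenvector x of W with x Delta = 0
   gives the bad eigenvector x (x) xi of Phi_s, for any left eigenvector xi of
   e^{Ah} + z H(h).
   Nothing is used about e^{Ah}, H(h), B(h), the diagonal of W, delta or h; the
   invertibility of the E_k only makes Phi_s invertible, as the PBH test
   requires at theta = 0. *)

From HB Require Import structures.
From mathcomp Require Import all_boot all_order all_algebra.
From mathcomp Require Import complex mxtens.
From mathcomp Require Import all_classical all_reals all_analysis.
Set Implicit Arguments. Unset Strict Implicit. Unset Printing Implicit Defensive.
Import Order.TTheory GRing.Theory Num.Theory.
Local Open Scope ring_scope.

Section KroneckerProduct.
Variable F : comPzRingType.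

Lemma tensmxDr m n p q (A : 'M[F]_(m, n)) (B C : 'M[F]_(p, q)) :
  A *t (B + C) = A *t B + A *t C.
Proof. by apply/matrixP=> i j; rewrite !mxE mulrDr. Qed.

Lemma tensmxBr m n p q (A : 'M[F]_(m, n)) (B C : 'M[F]_(p, q)) :
  A *t (B - C) = A *t B - A *t C.
Proof. by apply/matrixP=> i j; rewrite !mxE mulrBr. Qed.

Lemma tensmxZl m n p q c (A : 'M[F]_(m, n)) (B : 'M[F]_(p, q)) :
  (c *: A) *t B = c *: (A *t B).
Proof. by apply/matrixP=> i j; rewrite !mxE mulrA. Qed.

Lemma tensmxZr m n p q c (A : 'M[F]_(m, n)) (B : 'M[F]_(p, q)) :
  A *t (c *: B) = c *: (A *t B).
Proof. by apply/matrixP=> i j; rewrite !mxE mulrCA. Qed.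

Lemma tens_rVE m n (a : 'rV[F]_m) (b : 'rV[F]_n) i j :
  (a *t b) 0 (mxtens_index (i, j)) = a 0 i * b 0 j.
Proof. by rewrite -tensmxE; congr ((a *t b) _ _); apply: val_inj. Qed.

Lemma tens_rV_mul m n p q (a : 'rV[F]_m) (b : 'rV[F]_n)
    (C : 'M[F]_(m, p)) (D : 'M[F]_(n, q)) :
  (a *t b : 'rV_(m * n)) *m (C *t D) = (a *m C) *t (b *m D) :> 'rV_(p * q).
Proof. exact: (@tensmx_mul F 1 m 1 n p q a b C D). Qed.

End KroneckerProduct.

Lemma tens_rV_eq0 (F : idomainType) m n (a : 'rV[F]_m) (b : 'rV[F]_n) :
  (a *t b == 0) = (a == 0) || (b == 0).
Proof.
apply/eqP/orP => [/matrixP ab0 | [] /eqP->]; last 2 first.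
- by rewrite tens0mx.
- by rewrite tensmx0.
have [a0|/rV0Pn[i ai]] := eqVneq a 0; first by left; apply/eqP.
right; apply/eqP/rowP => j; rewrite mxE.
have /eqP := ab0 0 (mxtens_index (i, j)).
by rewrite tens_rVE mxE mulf_eq0 (negbTE ai) => /eqP.
Qed.

Section EigenbasisDecomposition.
Variables (F : fieldType) (N n : nat) (v : 'I_N -> 'rV[F]_N).
Let V := \matrix_(k < N) v k.

Lemma sum_tens_rVE (xi : 'I_N -> 'rV[F]_n) a j :
  (\sum_k v k *t xi k) 0 (mxtens_index (a, j)) = (V^T *m \matrix_k xi k) a j.
Proof.
by rewrite summxE !mxE; apply: eq_bigr => k _; rewrite tens_rVE !mxE mulrC.
Qed.

Hypothesis V_free : row_free V.

Lemma basis_rV_neq0 k : v k != 0.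
Proof.
rewrite -(rowK v k) rowE mulmx_free_eq0 //.
by apply/eqP => /matrixP/(_ 0 k); rewrite !mxE !eqxx => /eqP; rewrite oner_eq0.
Qed.

Let Vt_unit : V^T \in unitmx.
Proof. by rewrite unitmx_tr -row_free_unit. Qed.

Lemma sum_tens_eq0 (xi : 'I_N -> 'rV[F]_n) :
  \sum_k v k *t xi k = 0 -> forall k, xi k = 0.
Proof.
move=> sum0 k; have VXi0 : V^T *m \matrix_k xi k = 0.
  by apply/matrixP => a j; rewrite -sum_tens_rVE sum0 !mxE.
by rewrite -(rowK xi k) -(mulKmx Vt_unit (\matrix_k xi k)) VXi0 mulmx0 row0.
Qed.

Lemma sum_tens_decomp (eta : 'rV[F]_(N * n)) :
  exists xi : 'I_N -> 'rV[F]_n, eta = \sum_k v k *t xi k.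
Proof.
pose Xi := invmx V^T *m \matrix_(a, j) eta 0 (mxtens_index (a, j)).
exists (fun k => row k Xi); apply/rowP => c; case: (mxtens_indexP c) => a j.
rewrite sum_tens_rVE.
have -> : \matrix_k row k Xi = Xi by apply/row_matrixP => k; rewrite rowK.
by rewrite mulKVmx // mxE.
Qed.

End EigenbasisDecomposition.

Definition pbh_test (F : fieldType) q s (M : 'M[F]_q) (G : 'M[F]_(q, s)) :=
  forall z (x : 'rV_q), x *m M = z *: x -> x *m G = 0 -> x = 0.

Lemma rank_pbhP (F : fieldType) q s (M : 'M[F]_q) (G : 'M[F]_(q, s)) :
  (forall z, \rank (row_mx (z%:M - M) G) = q) <-> pbh_test M G.
Proof.
have kerE z (x : 'rV_q) :
    (x *m row_mx (z%:M - M) G == 0) = (x *m M == z *: x) && (x *m G == 0).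
  by rewrite mul_mx_row row_mx_eq0 mulmxBr mul_mx_scalar subr_eq0 eq_sym.
split=> [full z x xM xG | pbh z].
- have free : row_free (row_mx (z%:M - M) G) by rewrite /row_free full.
  by apply/eqP; rewrite -(mulmx_free_eq0 _ free) kerE xM xG !eqxx.
- apply/eqP/inj_row_free => x /eqP; rewrite kerE => /andP[/eqP xM /eqP xG].
  exact: pbh z x xM xG.
Qed.

Lemma pair_controllableP (R : rcfType) q s
    (M : 'M[R[i]]_q) (G : 'M[R[i]]_(q, s)) :
  pair_controllable M G <-> pbh_test M G.
Proof. exact: rank_pbhP. Qed.

Lemma exists_eigenvector (F : closedFieldType) k (M : 'M[F]_k) : (0 < k)%N ->
  exists theta, exists2 x : 'rV_k, x *m M = theta *: x & x != 0.
Proof.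
move=> k_gt0; have : size (char_poly M) != 1%N.
  by rewrite size_char_poly; case: k k_gt0 M.
case/closed_rootP => theta; rewrite -eigenvalue_root_char.
case/eigenvalueP => x xM x0.
by exists theta, x.
Qed.

Lemma Cayley_Hamilton_exprn (F : comNzRingType) d (A : 'M[F]_d) :
  exists c : 'I_d -> F, A ^+ d = \sum_(j < d) c j *: A ^+ j.
Proof.
case: d A => [|d] A; first by exists (fun=> 0); apply/matrixP => -[].
exists (fun j => - (char_poly A)`_j).
have := Cayley_Hamilton A.
rewrite -{1}[char_poly A]coefK poly_def size_char_poly rmorph_sum big_ord_recr /=.
have -> : (char_poly A)`_d.+1 = 1.
  by have /monicP := char_poly_monic A; rewrite lead_coefE size_char_poly.
rewrite scale1r rmorphXn /= horner_mx_X => /eqP; rewrite addrC addr_eq0 => /eqP ->.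
rewrite -sumrN; apply: eq_bigr => j _.
by rewrite linearZ /= rmorphXn /= horner_mx_X scaleNr.
Qed.

Section Reachability.
Variables (F : fieldType) (d r : nat) (Phi : 'M[F]_d) (Psi : 'M[F]_(d, r)).

(* The column space of the Kalman matrix [Psi, Phi Psi, ..., Phi^(d-1) Psi],
   transposed into a row space. *)
Definition reachable_space := (\sum_(i < d) <<(Phi ^+ i *m Psi)^T>>)%MS.

Lemma sub_kermx_reachableP k (Y : 'M[F]_(k, d)) :
  reflect (forall i : 'I_d, Y *m (Phi ^+ i *m Psi) = 0)
          (Y <= kermx reachable_space^T)%MS.
Proof.
apply: (iffP sub_kermxP) => [Y0 i | Y0].
  rewrite -[Phi ^+ i *m Psi]trmxK.
  have /submxP[D ->] : ((Phi ^+ i *m Psi)^T <= reachable_space)%MS.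
    by rewrite (sumsmx_sup i) // genmxE.
  by rewrite trmx_mul mulmxA Y0 mul0mx.
apply: trmx_inj; rewrite trmx_mul trmxK trmx0; apply/sub_kermxP.
apply/sumsmx_subP => i _; rewrite genmxE; apply/sub_kermxP.
by rewrite -trmx_mul Y0 trmx0.
Qed.

Lemma stablemx_unreachable : stablemx (kermx reachable_space^T) Phi.
Proof.
have /sub_kermx_reachableP U0 := submx_refl (kermx reachable_space^T).
apply/sub_kermx_reachableP => i.
rewrite -mulmxA (mulmxA Phi) -[Phi *m _]/(Phi * _) -exprS.
have [lt_id | ge_id] := ltnP i.+1 d; first exact: U0 (Ordinal lt_id).
have -> : i.+1 = d by apply/eqP; rewrite eqn_leq ge_id ltn_ord.
have [c ->] := Cayley_Hamilton_exprn Phi.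
rewrite mulmx_suml mulmx_sumr big1 // => j _.
by rewrite -scalemxAl -scalemxAr U0 scaler0.
Qed.

Lemma reachable_sum : row_full reachable_space -> forall y : 'cV_d,
  exists w : nat -> 'cV_r, y = \sum_(i < d) Phi ^+ i *m Psi *m w i.
Proof.
(* [complex] shadows [sub_sums_genmxP] by a variant for square blocks. *)
move=> full y.
have /mxalgebra.sub_sums_genmxP[u yu] := submx_full y^T full.
exists (fun i => oapp (fun j => (u j)^T) 0 (insub i)).
rewrite -[y]trmxK yu linear_sum; apply: eq_bigr => i _.
by rewrite valK /= trmx_mul trmxK.
Qed.

End Reachability.

Lemma pbh_reachable_full (F : closedFieldType) d r
    (Phi : 'M[F]_d) (Psi : 'M[F]_(d, r)) :
  pbh_test Phi Psi -> row_full (reachable_space Phi Psi).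
Proof.
move=> pbh; set U := kermx (reachable_space Phi Psi)^T.
suff U0 : U = 0 by move/eqP: U0; rewrite kermx_eq0 /row_free mxrank_tr.
apply/eqP/contraT; rewrite -mxrank_eq0 -lt0n => rU.
have [a [w wPhi w0]] := exists_eigenvector (restrictmx U Phi) rU.
pose x := w *m row_base U.
have xPhi : x *m Phi = a *: x.
  apply/eigenspaceP; rewrite -sub_eigenspace_conjmx ?row_base_free //.
    by apply/eigenspaceP.
  by rewrite stablemx_row_base stablemx_unreachable.
have d_gt0 : (0 < d)%N by apply: leq_trans rU (rank_leq_col U).
have xU : (x <= U)%MS.
  by apply: submx_trans (submxMl w _) _; rewrite eq_row_base.
have /sub_kermx_reachableP/(_ (Ordinal d_gt0)) := xU.
rewrite expr0 mul1mx => xPsi; have /eqP := pbh a x xPhi xPsi.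
by rewrite /x mulmx_free_eq0 ?row_base_free // (negPf w0).
Qed.

Lemma traj_closed_form (F : nzRingType) d r
    (Phi : 'M[F]_d) (Psi : 'M[F]_(d, r)) x0 u K :
  traj Phi Psi x0 u K =
  Phi ^+ K *m x0 + \sum_(i < K) Phi ^+ i *m Psi *m u (K - i.+1)%N.
Proof.
elim: K => [|K IH] /=; first by rewrite expr0 mul1mx big_ord0 addr0.
rewrite IH mulmxDr mulmxA -[Phi *m _]/(Phi * _) -exprS mulmx_sumr.
rewrite big_ord_recl expr0 mul1mx subn1 /= [Psi *m _ + _]addrC addrA.
congr (_ + _ + _); apply: eq_bigr => i _.
by rewrite /bump leq0n add1n subSS !mulmxA -[Phi *m _]/(Phi * _) -exprS.
Qed.

Section RealSystem.
Variable R : rcfType.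
Local Notation mxRe := (map_mx (@complex.Re R)).

Lemma mxCE m n (M : 'M[R]_(m, n)) : mxC M = map_mx (real_complex R) M.
Proof. by []. Qed.

Lemma mxC_exprn d (A : 'M[R]_d) k : mxC (A ^+ k) = mxC A ^+ k.
Proof.
elim: k => [|k IH]; first by rewrite !expr0 mxCE map_mx1.
rewrite !exprS -[A * _]/(A *m _) -[mxC A * _]/(mxC A *m _).
by rewrite mxCE map_mxM -!mxCE IH.
Qed.

Lemma mxRe_mxC_mul a b c (M : 'M[R]_(a, b)) (w : 'M[R[i]]_(b, c)) :
  mxRe (mxC M *m w) = M *m mxRe w.
Proof.
apply/matrixP=> i j; rewrite !mxE raddf_sum; apply: eq_bigr => k _.
by rewrite !mxE /toC; case: (w k j) => x y /=; rewrite mul0r subr0.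
Qed.

Lemma mxRe_mxC m n (M : 'M[R]_(m, n)) : mxRe (mxC M) = M.
Proof. by apply/matrixP=> i j; rewrite !mxE. Qed.

Variables (d r : nat) (Phi : 'M[R]_d) (Psi : 'M[R]_(d, r)).

Lemma left_eigen_traj theta (eta : 'rV[R[i]]_d) x0 u k :
  eta *m mxC Phi = theta *: eta -> eta *m mxC Psi = 0 ->
  eta *m mxC (traj Phi Psi x0 u k) = theta ^+ k *: (eta *m mxC x0).
Proof.
move=> etaPhi etaPsi; elim: k => [|k IH] /=; first by rewrite expr0 scale1r.
rewrite !mxCE map_mxD !map_mxM -!mxCE mulmxDr !mulmxA etaPhi etaPsi mul0mx addr0.
by rewrite -scalemxAl IH scalerA exprS.
Qed.

Lemma sys_controllable_pbh :
  Phi \in unitmx -> sys_controllable Phi Psi -> pbh_test (mxC Phi) (mxC Psi).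
Proof.
move=> Phi_unit ctrl theta eta etaPhi etaPsi.
have Phi_free : row_free (mxC Phi) by rewrite row_free_unit mxCE map_unitmx.
have [theta0 | theta_neq0] := eqVneq theta 0.
  by apply/eqP; rewrite -(mulmx_free_eq0 _ Phi_free) etaPhi theta0 scale0r.
have eta_orth (x0 : 'cV_d) : eta *m mxC x0 = 0.
  have [K [u trajK]] := ctrl x0.
  have /esym/eqP := left_eigen_traj x0 u K etaPhi etaPsi.
  rewrite trajK [mxC 0]mxCE map_mx0 mulmx0 scaler_eq0 expf_eq0.
  by rewrite (negPf theta_neq0) andbF => /eqP.
apply/rowP => j; have /matrixP/(_ 0 0) := eta_orth (delta_mx j 0).
by rewrite mxCE map_delta_mx -colE !mxE.
Qed.

Lemma pbh_sys_controllable :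
  pbh_test (mxC Phi) (mxC Psi) -> sys_controllable Phi Psi.
Proof.
move=> pbh x0; have full := pbh_reachable_full pbh.
have [w /(congr1 mxRe)] := reachable_sum full (mxC (- (Phi ^+ d *m x0))).
rewrite mxRe_mxC raddf_sum => reach.
exists d, (fun j => mxRe (w (d - j.+1)%N)); rewrite traj_closed_form.
apply/eqP; rewrite addrC addr_eq0 reach; apply/eqP/eq_bigr => i _.
rewrite -mxC_exprn -mxRe_mxC_mul mxCE map_mxM -!mxCE.
by rewrite subnSK // subKn // ltnW.
Qed.

Lemma sys_controllableP : Phi \in unitmx ->
  sys_controllable Phi Psi <-> pbh_test (mxC Phi) (mxC Psi).
Proof.
move=> Phi_unit.
by split; [apply: sys_controllable_pbh | apply: pbh_sys_controllable].
Qed.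

End RealSystem.

Section NetworkPBH.
Variables (R : rcfType) (N n p : nat).
Variables (W Delta : 'M[R[i]]_N) (X Y : 'M[R[i]]_n) (Bc : 'M[R[i]]_(n, p)).
Variables (v : 'I_N -> 'rV[R[i]]_N) (lambda : 'I_N -> R[i]).
Hypothesis v_free : row_free (\matrix_k v k).
Hypothesis v_eig : forall k, v k *m W = lambda k *: v k.

Local Notation Phi := (1%:M *t X + W *t Y).
Local Notation Psi := (Delta *t Bc).
Local Notation E k := (X + lambda k *: Y).

Lemma tens_left_eigen_mul z (x : 'rV_N) (xi : 'rV_n) : x *m W = z *: x ->
  (x *t xi) *m Phi = x *t (xi *m (X + z *: Y)).
Proof.
move=> xW; rewrite mulmxDr !tensmx_mul mulmx1 xW tensmxZl -tensmxZr -tensmxDr.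
by rewrite mulmxDr scalemxAr.
Qed.

Lemma sum_tens_mul (xi : 'I_N -> 'rV_n) :
  (\sum_k v k *t xi k) *m Phi = \sum_k v k *t (xi k *m E k).
Proof.
by rewrite mulmx_suml; apply: eq_bigr => k _; apply: tens_left_eigen_mul (v_eig k).
Qed.

Lemma sum_tens_left_eigenP theta (xi : 'I_N -> 'rV_n) :
  (\sum_k v k *t xi k) *m Phi = theta *: \sum_k v k *t xi k <->
  (forall k, xi k *m E k = theta *: xi k).
Proof.
rewrite sum_tens_mul scaler_sumr; split=> [eig k | eig]; last first.
  by apply: eq_bigr => k _; rewrite eig tensmxZr.
apply/eqP; rewrite -subr_eq0; apply/eqP; move: k; apply: (sum_tens_eq0 v_free).
rewrite (eq_bigr (fun k => v k *t (xi k *m E k) - theta *: (v k *t xi k))).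
  by rewrite sumrB eig subrr.
by move=> k _; rewrite tensmxBr tensmxZr.
Qed.

Lemma network_row_free : (forall k, E k \in unitmx) -> row_free Phi.
Proof.
move=> E_unit; apply: inj_row_free => eta.
have [xi ->] := sum_tens_decomp v_free eta.
rewrite sum_tens_mul => /(sum_tens_eq0 v_free) xiE0.
by apply: big1 => k _; rewrite -[xi k](mulmxK (E_unit k)) xiE0 mul0mx tensmx0.
Qed.

Lemma pbh_network_W : (0 < n)%N -> pbh_test Phi Psi -> pbh_test W Delta.
Proof.
move=> n_gt0 pbh z x xW xDelta.
have [mu [xi xiE xi_neq0]] := exists_eigenvector (X + z *: Y) n_gt0.
have : x *t xi = 0.
  apply: (pbh mu); first by rewrite (tens_left_eigen_mul _ xW) xiE tensmxZr.
  by rewrite tens_rV_mul xDelta tens0mx.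
by move/eqP; rewrite tens_rV_eq0 (negbTE xi_neq0) orbF => /eqP.
Qed.

Lemma pbh_network_E k : pbh_test Phi Psi -> pbh_test (E k) Bc.
Proof.
move=> pbh z x xE xB.
have : v k *t x = 0.
  apply: (pbh z); first by rewrite (tens_left_eigen_mul _ (v_eig k)) xE tensmxZr.
  by rewrite tens_rV_mul xB tensmx0.
by move/eqP; rewrite tens_rV_eq0 (negbTE (basis_rV_neq0 v_free k)) => /eqP.
Qed.

Lemma pbh_network_modes theta (S : {set 'I_N}) (xi : 'I_N -> 'rV_n) :
  pbh_test Phi Psi ->
  (forall k, k \in S -> in_left_eigenspace theta (E k) (xi k)) ->
  (exists2 k, k \in S & xi k != 0) -> (\sum_(k in S) v k *t xi k) *m Psi != 0.
Proof.
move=> pbh xiE [k0 k0S xi_neq0]; apply/eqP => sumPsi0.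
pose xiS k := if k \in S then xi k else 0.
have sumS : \sum_(k in S) v k *t xi k = \sum_k v k *t xiS k.
  rewrite big_mkcond; apply: eq_bigr => k _; rewrite /xiS.
  by case: (k \in S); rewrite ?tensmx0.
have xiSE k : xiS k *m E k = theta *: xiS k.
  by rewrite /xiS; case: ifP => kS; rewrite ?xiE // mul0mx scaler0.
have /(sum_tens_eq0 v_free)/(_ k0) : \sum_k v k *t xiS k = 0.
  by apply: (pbh theta); [apply/sum_tens_left_eigenP | rewrite -sumS].
by rewrite /xiS k0S; apply/eqP.
Qed.

Lemma network_pbh :
  pbh_test W Delta -> (forall k, pbh_test (E k) Bc) ->
  (forall (theta : R[i]) (S : {set 'I_N}), (1 < #|S|)%N ->
     (forall k, k \in S -> eigenvalue (E k) theta) ->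
     forall xi : 'I_N -> 'rV_n,
       (forall k, k \in S -> in_left_eigenspace theta (E k) (xi k)) ->
       (exists2 k, k \in S & xi k != 0) ->
       (\sum_(k in S) v k *t xi k) *m Psi != 0) ->
  pbh_test Phi Psi.
Proof.
move=> pbhW pbhE modes theta eta; have [xi ->] := sum_tens_decomp v_free eta.
move=> /sum_tens_left_eigenP xiE.
pose S := [set k | xi k != 0].
have -> : \sum_k v k *t xi k = \sum_(k in S) v k *t xi k.
  rewrite [RHS]big_mkcond; apply: eq_bigr => k _; rewrite inE.
  by have [->|] := eqVneq (xi k) 0; rewrite ?tensmx0.
have [S_le1 | S_gt1] := leqP #|S| 1; last first.
  have eigS k : k \in S -> eigenvalue (E k) theta.
    by rewrite inE => xi_neq0; apply/eigenvalueP; exists (xi k).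
  have /card_gt0P[k kS] : (0 < #|S|)%N by apply: ltnW.
  have exS : exists2 k, k \in S & xi k != 0 by exists k; rewrite // inE in kS.
  move=> sumPsi0; case/negP: (modes theta S S_gt1 eigS xi (fun k _ => xiE k) exS).
  exact/eqP.
move: S_le1; rewrite leq_eqVlt ltnS leqn0.
case/orP => [/cards1P[k ->] | /eqP/cards0_eq ->]; last by rewrite big_set0.
rewrite big_set1 => /eqP; rewrite tens_rV_mul tens_rV_eq0.
case/orP => [/eqP vDelta0 | /eqP xiB0].
  by case/negP: (basis_rV_neq0 v_free k); rewrite (pbhW _ _ (v_eig k) vDelta0).
by rewrite (pbhE k theta _ (xiE k) xiB0) tensmx0.
Qed.

End NetworkPBH.

Theorem corollary1 (R : realType) (N n m p : nat)
  (hN : (0 < N)%N) (hn : (0 < n)%N) (hm : (0 < m)%N) (hp : (0 < p)%N)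
  (A : 'M[R]_n) (B : 'M[R]_(n, p)) (C : 'M[R]_(m, n)) (H : 'M[R]_(n, m))
  (W : 'M[R]_N) (delta : 'I_N -> R) (h : R)
  (hW : forall i : 'I_N, W i i = 0)
  (hdelta : forall i : 'I_N, delta i = 0 \/ delta i = 1)
  (hh : 0 < h)
  (v : 'I_N -> 'rV[R[i]]_N) (lambda : 'I_N -> R[i])
  (hv_indep : row_free (\matrix_(k < N) v k))
  (hv_eig : forall k : 'I_N, v k *m mxC W = lambda k *: v k)
  (hE_unit : forall k : 'I_N,
      mxC (expm A h) + lambda k *: mxC (int_expm A h *m (H *m C)) \in unitmx) :
  let Bh := int_expm A h *m B in
  let Hh := int_expm A h *m (H *m C) in
  let Delta := diag_mx (\row_i delta i) in
  let Phi_s := (1%:M : 'M[R]_N) *t expm A h + W *t Hh in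
  let Psi_s := Delta *t Bh in
  let E := fun k : 'I_N => mxC (expm A h) + lambda k *: mxC Hh in
  sys_controllable Phi_s Psi_s <->
  [/\ pair_controllable (mxC W) (mxC Delta),
      (forall k : 'I_N, pair_controllable (E k) (mxC Bh)) &
      (forall (theta : R[i]) (S : {set 'I_N}),
         (1 < #|S|)%N ->
         (forall k, k \in S -> eigenvalue (E k) theta) ->
         forall xi : 'I_N -> 'rV[R[i]]_n,
           (forall k, k \in S -> in_left_eigenspace theta (E k) (xi k)) ->
           (exists2 k, k \in S & xi k != 0) ->
           (\sum_(k in S) v k *t xi k) *m mxC Psi_s != 0)].
Proof.
move=> Bh Hh Delta Phi_s Psi_s E.
have PhiC : mxC Phi_s = 1%:M *t mxC (expm A h) + mxC W *t mxC Hh.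
  by rewrite /Phi_s mxCE map_mxD !map_mxT map_mx1.
have PsiC : mxC Psi_s = mxC Delta *t mxC Bh by rewrite mxCE map_mxT.
have Phi_unit : Phi_s \in unitmx.
  rewrite -(map_unitmx (real_complex R)) -mxCE -row_free_unit PhiC.
  exact: network_row_free hv_indep hv_eig hE_unit.
apply: iff_trans (sys_controllableP Psi_s Phi_unit) _; rewrite PhiC PsiC.
split=> [pbh | [/pair_controllableP pbhW pbhE modes]].
- split=> [|k|theta S _ _ xi xiE].
  + exact/pair_controllableP/(pbh_network_W hn pbh).
  + exact/pair_controllableP/(pbh_network_E hv_indep hv_eig pbh).
  + exact (pbh_network_modes hv_indep hv_eig pbh xiE).
- apply: network_pbh hv_indep hv_eig pbhW _ modes => k.
  exact/pair_controllableP/pbhE.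
Qed.
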